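(* Let $n\in\mathbb N$ and let $(M,d)$ be a metric space with $d(x,y)\in\{0,1,\dots,n\}$ for all $x,y\in M$. Let $\mu\in ba(\widetilde M)$ be positive, let $\gamma\in(0,1)$, and let $A\subseteq\widetilde M$ be $\gamma$-cyclically monotonic. Then there exists a cyclically monotonic subset $B\subseteq A$ with $\mu(B)\ge\mu(A)-2n(1-\gamma)\mu(\widetilde M)$.
   Context: $\widetilde M=\{(x,y)\in M\times M:x\ne y\}$. $ba(\widetilde M)$ denotes the bounded finitely additive signed measures on the power set of $\widetilde M$. For $\gamma\in(0,1]$, $A\subseteq\widetilde M$ is $\gamma$-cyclically monotonic if for every finite sequence $(x_1,y_1),\dots,(x_k,y_k)\in A$, with $y_{k+1}=y_1$, $\sum_{i=1}^k\min\{d(x_i,y_{i+1})-\gamma d(x_i,y_i),\,d(y_i,y_{i+1})\}\ge0$. $A$ is cyclically monotonic if for every such finite sequence $\sum_{i=1}^k d(x_i,y_{i+1})\ge\sum_{i=1}^k d(x_i,y_i)$ (equivalently, $1$-cyclically monotonic). *)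

From mathcomp Require Import all_boot all_order all_algebra.
From mathcomp Require Import boolp classical_sets reals.
Set Implicit Arguments. Unset Strict Implicit. Unset Printing Implicit Defensive.
Import Order.TTheory GRing.Theory Num.Theory.
Local Open Scope ring_scope.
Local Open Scope classical_set_scope.

Definition is_metric (R : realType) (M : Type) (d : M -> M -> R) : Prop :=
  [/\ forall x y, 0 <= d x y,
      forall x y, d x y = 0 <-> x = y,
      forall x y, d x y = d y x
    & forall x y z, d x z <= d x y + d y z].

Definition Mtilde (M : Type) : set (M * M) := [set p | p.1 <> p.2].
Arguments Mtilde : clear implicits.

(* mu is a positive element of ba(M~): a finitely additive, nonnegative,
   real-valued (hence bounded) set function on the power set of M~.
   Values of mu on sets not contained in M~ are irrelevant. *)
Definition positive_ba (R : realType) (M : Type) (mu : set (M * M) -> R) : Prop :=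
  [/\ mu set0 = 0,
      forall A, A `<=` Mtilde M -> 0 <= mu A
    & forall A B, A `<=` Mtilde M -> B `<=` Mtilde M -> A `&` B = set0 ->
        mu (A `|` B) = mu A + mu B].

Definition gamma_cyc_mono (R : realType) (M : Type) (d : M -> M -> R) (gamma : R)
    (A : set (M * M)) : Prop :=
  forall (k : nat) (p : nat -> M * M), (forall i, (i < k)%N -> A (p i)) ->
    0 <= \sum_(i < k)
           Num.min (d (p i).1 (p (i.+1 %% k)%N).2 - gamma * d (p i).1 (p i).2)
                   (d (p i).2 (p (i.+1 %% k)%N).2).

Definition cyc_mono (R : realType) (M : Type) (d : M -> M -> R)
    (A : set (M * M)) : Prop :=
  forall (k : nat) (p : nat -> M * M), (forall i, (i < k)%N -> A (p i)) ->
    \sum_(i < k) d (p i).1 (p i).2 <= \sum_(i < k) d (p i).1 (p (i.+1 %% k)%N).2.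

(* A gamma-cyclically monotonic A carries a 1-Lipschitz potential f with
   f x - f y >= gamma d(x,y) on A: an infimum of costs of chains in A, as in
   Rockafellar's theorem, finite because d <= n.  As d is integer-valued, every
   rounding floor (f + t) is again 1-Lipschitz, so the pairs of A on which it is
   tight, floor (f x + t) - floor (f y + t) = d(x,y), form a cyclically monotonic
   set.  A pair of A can fail to be tight only if f y + t lies less than its
   defect d(x,y) - (f x - f y) <= n(1 - gamma) above an integer.  Choosing
   1/m in [n(1 - gamma), 2n(1 - gamma)], each pair fails for at most one shift
   t = j/m, j < m, so by finite additivity some shift loses at most
   mu(M~)/m <= 2n(1 - gamma) mu(M~). *)

From mathcomp Require Import all_boot all_order all_algebra.
From mathcomp Require Import boolp classical_sets reals.
From mathcomp Require Import lra.
Set Implicit Arguments. Unset Strict Implicit. Unset Printing Implicit Defensive.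
Import Order.TTheory GRing.Theory Num.Theory.
Local Open Scope ring_scope.
Local Open Scope classical_set_scope.

Lemma big_ord_rot1_mod {T : Type} {idx : T} {op : Monoid.com_law idx}
    (F : nat -> T) (k : nat) :
  \big[op/idx]_(i < k) F (i.+1 %% k)%N = \big[op/idx]_(i < k) F i.
Proof.
case: k => [|k]; first by rewrite !big_ord0.
rewrite big_ord_recr big_ord_recl /= modnn Monoid.mulmC; congr (op _ _).
by apply: eq_bigr => i _ /=; rewrite modn_small ?ltnS.
Qed.

Lemma exists_le_mean (R : realDomainType) (m : nat) (a : nat -> R) :
  (0 < m)%N -> exists2 j, (j < m)%N & a j *+ m <= \sum_(i < m) a i.
Proof.
move=> m_gt0; pose j0 := Ordinal m_gt0.
case: (@arg_minP _ _ _ j0 predT (fun i : 'I_m => a i)) => // j _ jmin.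
exists j => //; rewrite -[X in _ *+ X](card_ord m) -sumr_const.
by apply: ler_sum => i _; apply: jmin.
Qed.

Lemma unit_fraction_between (R : realType) (e : R) : 0 < e -> e <= 1 ->
  exists2 m : nat, (0 < m)%N & e <= m%:R^-1 <= 2 * e.
Proof.
move=> e_gt0 e_le1; set m := Num.truncn e^-1.
have einv : e * e^-1 = 1 by rewrite mulfV ?gt_eqF.
have inv_ge1 : 1 <= e^-1 by rewrite invf_ge1.
have /andP [m_le m_gt] := truncn_itv (le_trans ler01 inv_ge1).
rewrite -/m in m_le m_gt.
have m_gt0 : (0 < m)%N by rewrite truncn_gt0.
have m_ge1 : 1 <= (m%:R : R) by rewrite ler1n.
exists m => //; rewrite -natr1 in m_gt.
have e_m : e * m%:R <= 1 by rewrite -[X in _ <= X]einv ler_pM2l.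
have m_e : 1 <= 2 * e * m%:R.
  have := ler_peMr (ltW e_gt0) m_ge1.
  suff : 1 < e * (m%:R + 1) by rewrite mulrDr mulr1; lra.
  by rewrite -[X in X < _]einv ltr_pM2l.
have m_gtR : 0 < (m%:R : R) by rewrite ltr0n.
by rewrite -div1r ler_pdivlMr // ler_pdivrMr // e_m; lra.
Qed.

Section PositiveBa.
Variables (R : realType) (M : Type) (mu : set (M * M) -> R).
Hypothesis hmu : positive_ba mu.

Lemma positive_ba_setID (A C : set (M * M)) : A `<=` Mtilde M ->
  mu A = mu (A `&` C) + mu (A `\` C).
Proof.
case: hmu => _ _ mu_add AMt; rewrite -mu_add ?setUIDK //.
- exact: subset_trans (@subIsetl _ A C) AMt.
- exact: subset_trans (@subDsetl _ A C) AMt.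
- by apply/seteqP; split => p // [[_ ?] [_ ?]].
Qed.

Lemma positive_ba_le (A B : set (M * M)) : A `<=` B -> B `<=` Mtilde M ->
  mu A <= mu B.
Proof.
move=> AB BMt; rewrite (positive_ba_setID A BMt) (setIidr AB) lerDl.
by case: hmu => _ mu_ge0 _; apply: mu_ge0 => p [/BMt].
Qed.

Lemma positive_ba_bigsetU (F : nat -> set (M * M)) (k : nat) :
  (forall j, F j `<=` Mtilde M) ->
  (forall i j, (i < j < k)%N -> F i `&` F j = set0) ->
  mu (\big[setU/set0]_(j < k) F j) = \sum_(j < k) mu (F j).
Proof.
case: hmu => mu0 _ mu_add FMt; elim: k => [|k IHk] Fdisj.
  by rewrite !big_ord0.
rewrite !big_ord_recr /= mu_add ?IHk //.
- by move=> i j /andP [ij jk]; apply: Fdisj; rewrite ij ltnW.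
- by rewrite -bigcup_mkord => p [j _ /FMt].
- apply/seteqP; split => p // [].
  rewrite -bigcup_mkord => -[j /= jk Fjp] Fkp.
  have : (F j `&` F k) p by [].
  by rewrite Fdisj // jk ltnSn.
Qed.

Lemma positive_ba_pigeonhole (F : nat -> set (M * M)) (m : nat) : (0 < m)%N ->
  (forall j, F j `<=` Mtilde M) ->
  (forall i j, (i < j < m)%N -> F i `&` F j = set0) ->
  exists2 j, (j < m)%N & mu (F j) <= mu (Mtilde M) / m%:R.
Proof.
move=> m_gt0 FMt Fdisj.
have [j jm Fj_mean] := @exists_le_mean _ _ (mu \o F) m_gt0.
exists j => //; rewrite ler_pdivlMr ?ltr0n // mulr_natr.
apply: le_trans Fj_mean _; rewrite -positive_ba_bigsetU //.
by apply: positive_ba_le => // p; rewrite -bigcup_mkord => -[i _ /FMt].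
Qed.

End PositiveBa.

Section Contact.
Variables (R : realType) (M : Type) (d : M -> M -> R).

Definition contact (g : M -> R) := [set p : M * M | g p.1 - g p.2 = d p.1 p.2].

Lemma cyc_mono_contact (g : M -> R) (B : set (M * M)) :
  (forall x y, g x - g y <= d x y) -> B `<=` contact g -> cyc_mono d B.
Proof.
move=> g_lip Bg k p pB.
have -> : \sum_(i < k) d (p i).1 (p i).2 = \sum_(i < k) (g (p i).1 - g (p i).2).
  by apply: eq_bigr => i _; rewrite (Bg _ (pB i (ltn_ord i))).
rewrite sumrB -(big_ord_rot1_mod (fun i => g (p i).2)) -sumrB.
by apply: ler_sum => i _; apply: g_lip.
Qed.

End Contact.

Lemma floor_sub_le (R : realType) (u v w : R) : w \is a Num.int -> u - v <= w ->
  (Num.floor u)%:~R - (Num.floor v)%:~R <= w.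
Proof.
move=> wZ uvw; rewrite lerBlDr -[w](floorK wZ) -intrD ler_int.
by rewrite addrC -floorDrz //; apply: le_floor; rewrite -lerBlDl.
Qed.

Lemma floor_sub_lt (R : realType) (u v w : R) : w \is a Num.int ->
  (Num.floor u)%:~R - (Num.floor v)%:~R < w ->
  v - (Num.floor v)%:~R < w - (u - v).
Proof.
move=> wZ; rewrite ltrBlDr -[w](floorK wZ) -intrD ltr_int.
rewrite addrC -floorDrz // floor_lt_int floorDrz // intrD floorK //; lra.
Qed.

Lemma frac_shift_lt_inv_unique (R : realType) (u : R) (m i j : nat) :
  (i < j < m)%N ->
  u + i%:R / m%:R - (Num.floor (u + i%:R / m%:R))%:~R < m%:R^-1 ->
  u + j%:R / m%:R - (Num.floor (u + j%:R / m%:R))%:~R < m%:R^-1 -> False.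
Proof.
move=> /andP [ij jm]; set c := (m%:R^-1 : R).
have c_ge0 : 0 <= c by rewrite invr_ge0.
have mc : m%:R * c = 1 by rewrite mulfV // pnatr_eq0 -lt0n (leq_trans _ jm).
have ij_c : i%:R * c + c <= j%:R * c.
  rewrite -[c in _ + c]mul1r -mulrDl.
  by apply: ler_wpM2r; rewrite // natr1 ler_nat.
have jm_c : j%:R * c + c <= 1.
  rewrite -[X in _ <= X]mc -[c in _ + c]mul1r -mulrDl.
  by apply: ler_wpM2r; rewrite // natr1 ler_nat.
have := floor_le (u + i%:R * c); have := floor_le (u + j%:R * c).
set a := Num.floor (u + i%:R * c); set b := Num.floor (u + j%:R * c).
move=> b_le a_le a_near b_near.
have : a < b by rewrite -(ltr_int R); lra.
have : 0 <= i%:R * c by rewrite mulr_ge0.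
rewrite -lezD1 -(ler_int R) intrD; lra.
Qed.

Section Rounding.
Variables (R : realType) (M : Type) (d : M -> M -> R) (f : M -> R).
Hypothesis d_int : forall x y, d x y \is a Num.int.
Hypothesis f_lip : forall x y, f x - f y <= d x y.

Definition floor_shift (t : R) (z : M) : R := (Num.floor (f z + t))%:~R.

Lemma floor_shift_lip t x y : floor_shift t x - floor_shift t y <= d x y.
Proof. by apply: floor_sub_le => //; have := f_lip x y; lra. Qed.

Lemma floor_shift_fail_disjoint (A : set (M * M)) (m i j : nat) :
  (forall x y, A (x, y) -> d x y - (f x - f y) <= m%:R^-1) -> (i < j < m)%N ->
  (A `\` contact d (floor_shift (i%:R / m%:R))) `&`
  (A `\` contact d (floor_shift (j%:R / m%:R))) = set0.
Proof.
move=> A_defect ijm; apply/seteqP; split => // -[x y] /=.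
move=> [[Axy fail_i] [_ fail_j]].
have near t : floor_shift t x - floor_shift t y <> d x y ->
    f y + t - floor_shift t y < m%:R^-1.
  move=> fail; apply: lt_le_trans (A_defect _ _ Axy).
  have fail_lt : floor_shift t x - floor_shift t y < d x y.
    by rewrite lt_neqAle floor_shift_lip andbT; apply/eqP.
  have := @floor_sub_lt _ (f x + t) (f y + t) _ (d_int x y) fail_lt.
  rewrite /floor_shift; lra.
exact: frac_shift_lt_inv_unique ijm (near _ fail_i) (near _ fail_j).
Qed.
End Rounding.

Section Potential.
Variables (R : realType) (M : Type) (d : M -> M -> R) (n : nat) (gamma : R).
Variable A : set (M * M).
Hypothesis hd : is_metric d.
Hypothesis d_le : forall x y, d x y <= n%:R.
Hypothesis gamma_le1 : gamma <= 1.
Hypothesis hAg : gamma_cyc_mono d gamma A.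

Let d_ge0 x y : 0 <= d x y. Proof. by case: hd. Qed.
Let d_xx x : d x x = 0. Proof. by case: hd => _ dP _ _; apply/dP. Qed.
Let d_triangle x y z : d x z <= d x y + d y z. Proof. by case: hd. Qed.

Definition chain_cost (z : M) (p : nat -> M * M) (m : nat) : R :=
  d z (p 0%N).2 + \sum_(i < m) d (p i).1 (p i.+1).2
  - gamma * \sum_(i < m.+1) d (p i).1 (p i).2.

(* [0] is the cost of the empty chain; it keeps [potential z <= 0] and the infimum
   over a nonempty set. *)
Definition chain_costs (z : M) : set R := [set r | r = 0 \/ exists m p,
  (forall i, (i <= m)%N -> A (p i)) /\ r = chain_cost z p m].

Definition potential (z : M) : R := inf (chain_costs z).

Lemma chain_cost_ge z p m : (forall i, (i <= m)%N -> A (p i)) ->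
  - (n%:R + n%:R) <= chain_cost z p m.
Proof.
move=> pA; have := @hAg m.+1 p pA; rewrite big_ord_recr /= modnn.
set closing := Num.min _ _ => cycle_ge0.
have closing_le : closing <= n%:R by rewrite ge_min d_le orbT.
have open_ge : \sum_(i < m) Num.min (d (p i).1 (p (i.+1 %% m.+1)%N).2
      - gamma * d (p i).1 (p i).2) (d (p i).2 (p (i.+1 %% m.+1)%N).2)
    <= \sum_(i < m) d (p i).1 (p i.+1).2 - gamma * \sum_(i < m) d (p i).1 (p i).2.
  rewrite mulr_sumr -sumrB; apply: ler_sum => i _ /=.
  by rewrite modn_small ?ltnS // ge_min lexx.
have last_le : gamma * d (p m).1 (p m).2 <= n%:R.
  have [gamma_le0|gamma_ge0] := lerP gamma 0.
    by apply: le_trans (ler0n _ _); apply: mulr_le0_ge0.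
  by apply: le_trans (d_le _ _); apply: ler_piMl.
rewrite /chain_cost big_ord_recr /= mulrDr.
have := d_ge0 z (p 0%N).2; lra.
Qed.

Lemma potential_le z r : chain_costs z r -> potential z <= r.
Proof.
move=> zr; apply: ge_inf => //; exists (- (n%:R + n%:R)).
move=> s [->|[m [p [pA ->]]]].
  by rewrite oppr_le0 addr_ge0.
exact: chain_cost_ge.
Qed.

Lemma potential_glb z r : r <= 0 ->
  (forall m p, (forall i, (i <= m)%N -> A (p i)) -> r <= chain_cost z p m) ->
  r <= potential z.
Proof.
move=> r_le0 r_lb; apply: lb_le_inf; first by exists 0; left.
by move=> s [->|[m [p [pA ->]]]]; last exact: r_lb.
Qed.

Lemma potential_le0 z : potential z <= 0.
Proof. by apply: potential_le; left. Qed.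

Lemma potential_le_chain_cost z m p : (forall i, (i <= m)%N -> A (p i)) ->
  potential z <= chain_cost z p m.
Proof. by move=> pA; apply: potential_le; right; exists m, p. Qed.

Lemma potential_lip z w : potential z - potential w <= d z w.
Proof.
suff : potential z - d z w <= potential w by lra.
apply: potential_glb => [|m p pA].
  by have := potential_le0 z; have := d_ge0 z w; lra.
have := potential_le_chain_cost z pA.
rewrite /chain_cost; have := d_triangle z w (p 0%N).2; lra.
Qed.

Lemma potential_gap x y : A (x, y) -> gamma * d x y <= potential x - potential y.
Proof.
move=> Axy; suff : potential y + gamma * d x y <= potential x by lra.
apply: potential_glb => [|m p pA].
  have := @potential_le_chain_cost y 0 (fun=> (x, y)) (fun _ _ => Axy).
  by rewrite /chain_cost big_ord0 big_ord1 d_xx; lra.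
pose xy_p i := if i is j.+1 then p j else (x, y).
have xy_pA i : (i <= m.+1)%N -> A (xy_p i) by case: i => [_|i /pA].
have := potential_le_chain_cost y xy_pA.
suff -> : chain_cost y xy_p m.+1 = chain_cost x p m - gamma * d x y by lra.
rewrite /chain_cost big_ord_recl [in X in _ - gamma * X]big_ord_recl /= d_xx.
under eq_bigr => i _ do rewrite add0n /bump leq0n add1n.
under [X in _ - gamma * (_ + X)]eq_bigr => i _ do rewrite add0n.
lra.
Qed.

Lemma potential_defect x y : A (x, y) ->
  d x y - (potential x - potential y) <= n%:R * (1 - gamma).
Proof.
move=> /potential_gap gap; have : (1 - gamma) * d x y <= (1 - gamma) * n%:R.
  by apply: ler_wpM2l; rewrite ?subr_ge0.
lra.
Qed.

End Potential.

Theorem lemma2p7 (R : realType) (n : nat) (M : Type) (d : M -> M -> R)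
    (hd : is_metric d)
    (hint : forall x y, exists k : nat, (k <= n)%N /\ d x y = k%:R)
    (mu : set (M * M) -> R) (hmu : positive_ba mu)
    (gamma : R) (hg0 : 0 < gamma) (hg1 : gamma < 1)
    (A : set (M * M)) (hA : A `<=` Mtilde M) (hAg : gamma_cyc_mono d gamma A) :
  exists B : set (M * M), B `<=` A /\ cyc_mono d B /\
    mu A - 2 * n%:R * (1 - gamma) * mu (Mtilde M) <= mu B.
Proof.
have mu_Mt_ge0 : 0 <= mu (Mtilde M) by case: hmu => _ mu_ge0 _; apply: mu_ge0.
have mu_A_le : mu A <= mu (Mtilde M) by apply: positive_ba_le.
case: n hint => [|n] hint.
  exists A; split => //; split; last by rewrite mulr0n mulr0 !mul0r subr0.
  apply: (@cyc_mono_contact _ _ _ (fun=> 0)) => [x y|[x y] _];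
    rewrite /contact /= subrr; first by case: hd.
  by have [k [/[!leqn0]/eqP -> ->]] := hint x y.
set e := n.+1%:R * (1 - gamma); rewrite -(mulrA 2) -/e.
have e_gt0 : 0 < e by rewrite mulr_gt0 ?ltr0n ?subr_gt0.
have [e_gt1|e_le1] := ltrP 1 e.
  exists set0; split => //; split.
    by move=> [|k] p p0; [rewrite !big_ord0|case: (p0 0%N)].
  have : mu (Mtilde M) <= 2 * e * mu (Mtilde M) by rewrite ler_peMl; lra.
  by case: hmu => -> _ _; lra.
have [m m_gt0 /andP [e_le_m m_le_e]] := unit_fraction_between e_gt0 e_le1.
have d_le x y : d x y <= n.+1%:R by have [k [kn ->]] := hint x y; rewrite ler_nat.
have d_int x y : d x y \is a Num.int.
  by have [k [_ ->]] := hint x y; apply: natr_int.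
pose f := potential d gamma A.
have f_lip x y : f x - f y <= d x y := potential_lip hd d_le (ltW hg1) hAg x y.
pose C j := contact d (floor_shift f (j%:R / m%:R)).
have [j jm Fj_small] :
    exists2 j, (j < m)%N & mu (A `\` C j) <= mu (Mtilde M) / m%:R.
  apply: positive_ba_pigeonhole => // [i|i k ikm].
    exact: subset_trans (@subDsetl _ A _) hA.
  refine (floor_shift_fail_disjoint d_int f_lip (fun x y Axy => _) ikm).
  exact: le_trans (potential_defect hd d_le (ltW hg1) hAg Axy) e_le_m.
exists (A `&` C j); split; first exact: subIsetl.
split; first exact: cyc_mono_contact (floor_shift_lip d_int f_lip _) (@subIsetr _ _ _).
rewrite (positive_ba_setID hmu (C j) hA).
have : mu (Mtilde M) / m%:R <= mu (Mtilde M) * (2 * e) by rewrite ler_wpM2l.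
lra.
Qed.
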